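(* The function $f(t) = t^{-1}(1-e^t)\log(1-e^{-t})$ is a strictly decreasing bijection from $\mathbb{R}^+ = (0,\infty)$ onto $\mathbb{R}^+$. *)

From Stdlib Require Import Reals.
Open Scope R_scope.

Definition fact_f (t : R) : R := / t * (1 - exp t) * ln (1 - exp (- t)).

(* Write x = e^{-t}.  Then f(t) = ((1 - e^{-t}) / t) * (-ln(1 - x) / x) is a
   product of two positive factors: the slope of a chord of the concave
   function 1 - e^{-t} through the origin, which decreases in t, and
   -ln(1 - x) / x, which increases in x and hence decreases in t.  Both
   halves of the tangent-line inequality ln z <= z - 1 give the bounds
   -ln t < f(t) < 1/t, so f tends to +oo at 0 and to 0 at +oo, and the
   intermediate value theorem gives surjectivity. *)
From Stdlib Require Import Reals Lra.
From Stdlib Require Ranalysis5.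
From Coquelicot Require Import Coquelicot.
Open Scope R_scope.

Lemma ln_lt_sub1 (z : R) : 0 < z -> z <> 1 -> ln z < z - 1.
Proof.
  intros Hz Hz1.
  rewrite <- (ln_exp (z - 1)).
  apply ln_increasing; [assumption|].
  pose proof (exp_ineq1 (z - 1)); lra.
Qed.

Lemma exp_neg_bounds (t : R) : 0 < t -> 0 < exp (- t) < 1.
Proof.
  intros Ht; split; [apply exp_pos|].
  rewrite <- exp_0; apply exp_increasing; lra.
Qed.

Lemma exp_neg_mul_exp (t : R) : exp (- t) * exp t = 1.
Proof. rewrite <- exp_plus, Rplus_opp_l; apply exp_0. Qed.

Definition log_ratio (u : R) : R := - ln (1 - u) / u.

Lemma lt_neg_ln_one_sub (u : R) : 0 < u < 1 -> u < - ln (1 - u).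
Proof. intros Hu; pose proof (ln_lt_sub1 (1 - u)); lra. Qed.

Lemma neg_ln_one_sub_mul_lt (u : R) : 0 < u < 1 -> - ln (1 - u) * (1 - u) < u.
Proof.
  intros Hu.
  assert (Hinv : ln (/ (1 - u)) < / (1 - u) - 1).
  { apply ln_lt_sub1; [apply Rinv_0_lt_compat; lra|].
    intro E; apply (f_equal Rinv) in E; rewrite Rinv_inv, Rinv_1 in E; lra. }
  rewrite ln_Rinv in Hinv by lra.
  apply Rmult_lt_reg_r with (/ (1 - u)); [apply Rinv_0_lt_compat; lra|].
  replace (- ln (1 - u) * (1 - u) * / (1 - u)) with (- ln (1 - u)) by (field; lra).
  replace (u * / (1 - u)) with (/ (1 - u) - 1) by (field; lra).
  lra.
Qed.

Lemma log_ratio_pos (u : R) : 0 < u < 1 -> 0 < log_ratio u.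
Proof.
  intros Hu; pose proof (lt_neg_ln_one_sub u Hu).
  unfold log_ratio; apply Rdiv_lt_0_compat; lra.
Qed.

(* With w = (1 - v) / (1 - u), -ln(1 - v) = -ln(1 - u) - ln w and -ln w > 1 - w;
   the claim then reduces to -ln(1 - u) < u / (1 - u). *)
Lemma log_ratio_increasing (u v : R) : 0 < u -> u < v -> v < 1 ->
  log_ratio u < log_ratio v.
Proof.
  intros Hu Huv Hv.
  set (w := (1 - v) / (1 - u)).
  assert (Ew : 1 - v = (1 - u) * w) by (unfold w; field; lra).
  assert (Hw : 0 < w) by (unfold w; apply Rdiv_lt_0_compat; lra).
  assert (Hlnw : - ln w > (v - u) / (1 - u)).
  { assert (Hw1 : w <> 1) by (intro E; rewrite E in Ew; lra).
    pose proof (ln_lt_sub1 w Hw Hw1).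
    replace ((v - u) / (1 - u)) with (1 - w) by (unfold w; field; lra); lra. }
  assert (HL : - ln (1 - u) * (v - u) < (v - u) / (1 - u) * u).
  { pose proof (neg_ln_one_sub_mul_lt u ltac:(lra)).
    apply Rmult_lt_reg_r with (1 - u); [lra|].
    replace ((v - u) / (1 - u) * u * (1 - u)) with (u * (v - u)) by (field; lra).
    nra. }
  unfold log_ratio; rewrite Ew, ln_mult by lra.
  apply Rmult_lt_reg_r with (u * v); [nra|].
  replace (- ln (1 - u) / u * (u * v)) with (- ln (1 - u) * v) by (field; lra).
  replace (- (ln (1 - u) + ln w) / v * (u * v))
    with (- ln (1 - u) * u + - ln w * u) by (field; lra).
  nra.
Qed.

Definition exp_chord (t : R) : R := (1 - exp (- t)) / t.

Lemma exp_chord_pos (t : R) : 0 < t -> 0 < exp_chord t.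
Proof.
  intros Ht; pose proof (exp_neg_bounds t Ht).
  unfold exp_chord; apply Rdiv_lt_0_compat; lra.
Qed.

Lemma exp_neg_lt_exp_chord (t : R) : 0 < t -> exp (- t) < exp_chord t.
Proof.
  intros Ht; pose proof (exp_neg_mul_exp t); pose proof (exp_ineq1 t).
  pose proof (exp_pos (- t)).
  unfold exp_chord; apply Rmult_lt_reg_r with t; [lra|].
  replace ((1 - exp (- t)) / t * t) with (1 - exp (- t)) by (field; lra).
  nra.
Qed.

(* Writing t = s + d: e^{-s} (1 - e^{-d}) < d e^{-s} <= d (1 - e^{-s}) / s. *)
Lemma exp_chord_decreasing (s t : R) : 0 < s -> s < t ->
  exp_chord t < exp_chord s.
Proof.
  intros Hs Hst.
  set (d := t - s).
  assert (Hd : 0 < d) by (unfold d; lra).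
  assert (Et : exp (- t) = exp (- s) * exp (- d))
    by (rewrite <- exp_plus; f_equal; unfold d; ring).
  assert (Hd_exp : 1 - exp (- d) < d) by (pose proof (exp_ineq1 (- d)); lra).
  assert (Hs_exp : s * exp (- s) <= 1 - exp (- s))
    by (pose proof (exp_neg_mul_exp s); pose proof (exp_ineq1_le s);
        pose proof (exp_pos (- s)); nra).
  assert (He : 0 < exp (- s)) by apply exp_pos.
  unfold exp_chord; apply Rmult_lt_reg_r with (s * t); [nra|].
  replace ((1 - exp (- t)) / t * (s * t)) with (s * (1 - exp (- t))) by (field; lra).
  replace ((1 - exp (- s)) / s * (s * t)) with (t * (1 - exp (- s))) by (field; lra).
  rewrite Et; replace t with (s + d) by (unfold d; ring).
  assert (s * exp (- s) * (1 - exp (- d)) < s * exp (- s) * d)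
    by (apply Rmult_lt_compat_l; nra).
  nra.
Qed.

Lemma fact_f_factor (t : R) : 0 < t ->
  fact_f t = exp_chord t * log_ratio (exp (- t)).
Proof.
  intros Ht; unfold fact_f, exp_chord, log_ratio.
  pose proof (exp_neg_mul_exp t); pose proof (exp_pos (- t)).
  replace (exp t) with (/ exp (- t)) by (field_simplify_eq; lra).
  field; lra.
Qed.

Lemma fact_f_pos (t : R) : 0 < t -> 0 < fact_f t.
Proof.
  intros Ht; rewrite fact_f_factor by assumption.
  apply Rmult_lt_0_compat;
    [apply exp_chord_pos | apply log_ratio_pos, exp_neg_bounds]; assumption.
Qed.

Lemma fact_f_decreasing (s t : R) : 0 < s -> s < t -> fact_f t < fact_f s.
Proof.
  intros Hs Hst; rewrite !fact_f_factor by lra.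
  pose proof (exp_neg_bounds t ltac:(lra)).
  assert (Hexp : exp (- t) < exp (- s)) by (apply exp_increasing; lra).
  apply Rmult_le_0_lt_compat.
  - apply Rlt_le, exp_chord_pos; lra.
  - apply Rlt_le, log_ratio_pos; assumption.
  - apply exp_chord_decreasing; assumption.
  - apply log_ratio_increasing; try lra; apply exp_neg_bounds; assumption.
Qed.

Lemma neg_ln_lt_fact_f (t : R) : 0 < t -> - ln t < fact_f t.
Proof.
  intros Ht; rewrite fact_f_factor by assumption.
  pose proof (exp_neg_bounds t Ht) as Hx.
  assert (Hln : ln (1 - exp (- t)) < ln t)
    by (apply ln_increasing; [lra | pose proof (exp_ineq1 (- t)); lra]).
  assert (Hchord : exp (- t) * log_ratio (exp (- t)) < exp_chord t * log_ratio (exp (- t)))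
    by (apply Rmult_lt_compat_r;
        [apply log_ratio_pos | apply exp_neg_lt_exp_chord]; assumption).
  replace (exp (- t) * log_ratio (exp (- t))) with (- ln (1 - exp (- t)))
    in Hchord by (unfold log_ratio; field; lra).
  lra.
Qed.

Lemma fact_f_lt_inv (t : R) : 0 < t -> fact_f t < / t.
Proof.
  intros Ht; unfold fact_f.
  pose proof (exp_neg_bounds t Ht) as Hx.
  pose proof (neg_ln_one_sub_mul_lt (exp (- t)) Hx).
  pose proof (exp_neg_mul_exp t).
  apply Rmult_lt_reg_r with (t * exp (- t)); [nra|].
  replace (/ t * (1 - exp t) * ln (1 - exp (- t)) * (t * exp (- t)))
    with (- ln (1 - exp (- t)) * (1 - exp (- t))) by (field_simplify_eq; nra).
  replace (/ t * (t * exp (- t))) with (exp (- t)) by (field; lra).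
  assumption.
Qed.

Lemma fact_f_continuous (t : R) : 0 < t -> continuity_pt fact_f t.
Proof.
  intros Ht; apply continuity_pt_filterlim.
  apply (ex_derive_continuous (K := R_AbsRing) (V := R_NormedModule)).
  pose proof (exp_neg_bounds t Ht).
  unfold fact_f; auto_derive; repeat split; lra.
Qed.

Lemma fact_f_onto (y : R) : 0 < y -> exists t : R, 0 < t /\ fact_f t = y.
Proof.
  intros Hy.
  assert (Hlow : y < fact_f (exp (- y))).
  { pose proof (neg_ln_lt_fact_f (exp (- y)) (exp_pos _)) as H.
    rewrite ln_exp in H; lra. }
  assert (Hhigh : fact_f (/ y) < y).
  { pose proof (fact_f_lt_inv (/ y) (Rinv_0_lt_compat y Hy)) as H.
    rewrite Rinv_inv in H; exact H. }
  assert (Horder : exp (- y) < / y).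
  { rewrite exp_Ropp; apply Rinv_lt_contravar; [apply Rmult_lt_0_compat, exp_pos|];
      pose proof (exp_ineq1 y); lra. }
  destruct (Ranalysis5.IVT_interv (fun t => y - fact_f t) (exp (- y)) (/ y))
    as [z [Hz Ez]]; simpl; try lra.
  - intros a Ha; apply continuity_pt_minus; [apply continuity_pt_const; easy|].
    apply fact_f_continuous; pose proof (exp_pos (- y)); lra.
  - exists z; pose proof (exp_pos (- y)); split; lra.
Qed.

Theorem fact2p3 :
  (* strictly decreasing on (0, oo) *)
  (forall s t : R, 0 < s -> s < t -> fact_f t < fact_f s) /\
  (* maps (0, oo) into (0, oo) *)
  (forall t : R, 0 < t -> 0 < fact_f t) /\
  (* onto (0, oo) *)
  (forall y : R, 0 < y -> exists t : R, 0 < t /\ fact_f t = y).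
Proof.
  exact (conj fact_f_decreasing (conj fact_f_pos fact_f_onto)).
Qed.
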